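(* Let $\alpha_2\in\mathbb{C}$ and let $(q_1,p_1,q_2,p_2)$ be a solution of the Hamiltonian system $$\frac{dq_1}{dt}=q_1^2+p_2,\quad \frac{dp_1}{dt}=-2q_1p_1+\alpha_2-\frac12,\quad \frac{dq_2}{dt}=-3p_2^2+p_1+\frac t2,\quad \frac{dp_2}{dt}=q_2$$ (Hamiltonian $H=q_1^2p_1+(\frac12-\alpha_2)q_1-p_2^3+\frac t2p_2-\frac{q_2^2}{2}+p_1p_2$). The birational symplectic transformation $$r_1:(Q_1,P_1,Q_2,P_2)=\left(\frac1{q_1},\,-\left(q_1p_1+\frac12-\alpha_2\right)q_1,\,q_2,\,p_2\right)$$ takes this system into the Hamiltonian system $$\frac{dQ_1}{dt}=-Q_1^2P_2-1,\quad \frac{dP_1}{dt}=2Q_1P_1P_2+\left(\frac12-\alpha_2\right)P_2,\quad \frac{dQ_2}{dt}=-3P_2^2+\frac t2-Q_1^2P_1-\left(\frac12-\alpha_2\right)Q_1,\quad \frac{dP_2}{dt}=Q_2,$$ with polynomial Hamiltonian $$\tilde H=-P_1-\frac{Q_2^2}{2}-P_2^3+\frac t2P_2-\left(Q_1P_1+\frac{1-2\alpha_2}{2}\right)Q_1P_2 .$$ *)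

From HB Require Import structures.
From mathcomp Require Import all_boot all_order all_algebra.
From mathcomp Require Import all_classical all_reals all_analysis.
From mathcomp Require Import complex.
Set Implicit Arguments. Unset Strict Implicit. Unset Printing Implicit Defensive.
Import Order.TTheory GRing.Theory Num.Theory.
Import numFieldNormedType.Exports.
Local Open Scope ring_scope.
Local Open Scope complex_scope.

(* The complex numbers: C := R[i] for a real type R; derivatives are complex
   derivatives (C viewed as a normed space over itself). *)
Definition hasderiv (R : realType) (f : R[i] -> R[i]) (t d : R[i]) : Prop :=
  @is_derive R[i] R[i]^o R[i]^o t (1 : R[i]^o) (f : R[i]^o -> R[i]^o) (d : R[i]^o).

Definition Htilde (R : realType) (alpha2 t Q1 P1 Q2 P2 : R[i]) : R[i] :=
  - P1 - Q2 ^+ 2 / 2 - P2 ^+ 3 + t / 2 * P2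
  - (Q1 * P1 + (1 - 2 * alpha2) / 2) * Q1 * P2.

From HB Require Import structures.
From mathcomp Require Import all_boot all_order all_algebra.
From mathcomp Require Import all_classical all_reals all_analysis.
From mathcomp Require Import complex.
From mathcomp Require Import ring.
Import Order.TTheory GRing.Theory Num.Theory.
Import numFieldNormedType.Exports.
Local Open Scope ring_scope.
Local Open Scope classical_set_scope.

(* The derivatives of Q1 = 1/q1 and P1 follow from
   the quotient and product rules, and equating them with the right-hand sides
   of the new system reduces to rational identities in q1, p1, p2 that hold
   wherever q1 <> 0.  That the new system is Hamiltonian for H~ is read off
   by differentiating the polynomial H~ in each variable. *)

Set Implicit Arguments.

Section ComplexDerivativeRules.
Variable R : realType.
Implicit Types (f g : R[i] -> R[i]) (t a b : R[i]).

Lemma hasderiv_eq f t a b : hasderiv f t a -> a = b -> hasderiv f t b.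
Proof. by move=> ? <-. Qed.

Lemma hasderiv_cst t (c : R[i]) : hasderiv (fun => c) t 0.
Proof. exact: is_derive_cst. Qed.

Lemma hasderiv_id t : hasderiv id t 1.
Proof. exact: is_derive_id. Qed.

Lemma hasderivD f g t a b : hasderiv f t a -> hasderiv g t b ->
  hasderiv (fun x => f x + g x) t (a + b).
Proof. exact: is_deriveD. Qed.

Lemma hasderivN f t a : hasderiv f t a -> hasderiv (fun x => - f x) t (- a).
Proof. exact: is_deriveN. Qed.

Lemma hasderivM f g t a b : hasderiv f t a -> hasderiv g t b ->
  hasderiv (fun x => f x * g x) t (f t * b + g t * a).
Proof. exact: is_deriveM. Qed.

Lemma hasderivX f t a n : hasderiv f t a ->
  hasderiv (fun x => f x ^+ n) t (n%:R * f t ^+ n.-1 * a).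
Proof.
move=> fa; elim: n => [|n IHn].
  rewrite (_ : (fun x => f x ^+ 0) = fun => 1); last by apply/funext=> x.
  by apply: hasderiv_eq; [exact: hasderiv_cst | rewrite !mul0r].
rewrite (_ : (fun x => f x ^+ n.+1) = fun x => f x * f x ^+ n);
  last by apply/funext=> x; rewrite exprS.
apply: hasderiv_eq; first exact: hasderivM fa IHn.
by case: n {IHn} => [|n]; rewrite /= ?exprS; ring.
Qed.

Lemma hasderivV f t a : f t != 0 -> hasderiv f t a ->
  hasderiv (fun x => (f x)^-1) t (- (f t) ^- 2 * a).
Proof.
move=> ft0 fa; have df : derivable (f : R[i]^o -> R[i]^o) t 1 by case: fa.
apply: DeriveDef; first exact: derivableV.
by rewrite deriveV //; case: fa => _ ->.
Qed.

End ComplexDerivativeRules.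

Ltac hasderiv_step :=
  match goal with
  | |- hasderiv (fun x => ?c) _ _ => apply: hasderiv_cst
  | |- hasderiv (fun x => x) _ _ => apply: hasderiv_id
  | |- hasderiv (fun x => @?f x + @?g x) _ _ => apply: (hasderivD (f:=f) (g:=g))
  | |- hasderiv (fun x => - @?f x) _ _ => apply: (hasderivN (f:=f))
  | |- hasderiv (fun x => @?f x * @?g x) _ _ => apply: (hasderivM (f:=f) (g:=g))
  | |- hasderiv (fun x => @?f x ^+ ?n) _ _ => apply: (@hasderivX _ f _ _ n)
  | |- hasderiv (fun x => (@?f x)^-1) _ _ => apply: (hasderivV (f:=f))
  | |- hasderiv _ _ _ => eassumption
  end.

Ltac differentiate := apply: hasderiv_eq; first by repeat hasderiv_step.

Lemma two_neq0 (R : realType) : (2 : R[i]) != 0.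
Proof. by rewrite pnatr_eq0. Qed.

Lemma Htilde_hamilton_equations (R : realType) (alpha2 t a b c d : R[i]) :
  hasderiv (fun x => Htilde alpha2 t a x c d) b (- (a ^+ 2 * d) - 1) /\
  hasderiv (fun x => Htilde alpha2 t x b c d) a
    (- (2 * a * b * d + (2^-1 - alpha2) * d)) /\
  hasderiv (fun x => Htilde alpha2 t a b c x) d
    (- (3 * d ^+ 2) + t / 2 - a ^+ 2 * b - (2^-1 - alpha2) * a) /\
  hasderiv (fun x => Htilde alpha2 t a b x d) c (- c).
Proof.
rewrite /Htilde; have two0 := two_neq0 R.
by split; [|split; [|split]]; differentiate; rewrite /=; field.
Qed.

Lemma r1_transformed_system (R : realType) (alpha2 : R[i])
    (q1 p1 q2 p2 : R[i] -> R[i]) (t : R[i]) :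
  hasderiv q1 t (q1 t ^+ 2 + p2 t) ->
  hasderiv p1 t (- (2 * q1 t * p1 t) + alpha2 - 2^-1) ->
  hasderiv q2 t (- (3 * p2 t ^+ 2) + p1 t + t / 2) ->
  hasderiv p2 t (q2 t) ->
  q1 t != 0 ->
  let Q1 := fun t => (q1 t)^-1 in
  let P1 := fun t => - ((q1 t * p1 t + 2^-1 - alpha2) * q1 t) in
  hasderiv Q1 t (- (Q1 t ^+ 2 * p2 t) - 1) /\
  hasderiv P1 t (2 * Q1 t * P1 t * p2 t + (2^-1 - alpha2) * p2 t) /\
  hasderiv q2 t (- (3 * p2 t ^+ 2) + t / 2 - Q1 t ^+ 2 * P1 t
                 - (2^-1 - alpha2) * Q1 t) /\
  hasderiv p2 t (q2 t).
Proof.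
move=> dq1 dp1 dq2 dp2 q1t0 Q1 P1; have two0 := two_neq0 R.
rewrite /Q1 /P1; split; [|split; [|split]]; differentiate;
  by rewrite /= ?exprVn; field; rewrite ?q1t0.
Qed.

Theorem proposition7p1 (R : realType) (alpha2 : R[i]) (D : set R[i])
  (q1 p1 q2 p2 : R[i] -> R[i]) :
  open (D : set R[i]^o) ->
  (forall t, D t ->
     hasderiv q1 t (q1 t ^+ 2 + p2 t) /\
     hasderiv p1 t (- (2 * q1 t * p1 t) + alpha2 - 2^-1) /\
     hasderiv q2 t (- (3 * p2 t ^+ 2) + p1 t + t / 2) /\
     hasderiv p2 t (q2 t)) ->
  let Q1 := fun t => (q1 t)^-1 in
  let P1 := fun t => - ((q1 t * p1 t + 2^-1 - alpha2) * q1 t) in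
  let Q2 := q2 in
  let P2 := p2 in
  (* the transformed system is Hamiltonian with Hamiltonian Htilde:
     dQi/dt = dH~/dPi,  dPi/dt = - dH~/dQi *)
  (forall t a b c d : R[i],
     hasderiv (fun x => Htilde alpha2 t a x c d) b (- (a ^+ 2 * d) - 1) /\
     hasderiv (fun x => Htilde alpha2 t x b c d) a
       (- (2 * a * b * d + (2^-1 - alpha2) * d)) /\
     hasderiv (fun x => Htilde alpha2 t a b c x) d
       (- (3 * d ^+ 2) + t / 2 - a ^+ 2 * b - (2^-1 - alpha2) * a) /\
     hasderiv (fun x => Htilde alpha2 t a b x d) c (- c)) /\
  forall t, D t -> q1 t != 0 ->
     hasderiv Q1 t (- (Q1 t ^+ 2 * P2 t) - 1) /\
     hasderiv P1 t (2 * Q1 t * P1 t * P2 t + (2^-1 - alpha2) * P2 t) /\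
     hasderiv Q2 t (- (3 * P2 t ^+ 2) + t / 2 - Q1 t ^+ 2 * P1 t
                    - (2^-1 - alpha2) * Q1 t) /\
     hasderiv P2 t (Q2 t).
Proof.
move=> _ solution Q1 P1 Q2 P2; split.
  by move=> t a b c d; exact: Htilde_hamilton_equations.
move=> t Dt q1t0; have [dq1 [dp1 [dq2 dp2]]] := solution t Dt.
exact: r1_transformed_system.
Qed.
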